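(* Let $t$ be a positive integer. There exists a function $h: \mathbb{N} \times \mathbb{N} \rightarrow \mathbb{N}$ such that, for all positive integers $\ell,d$, if $M$ is a matroid with the $(t,2t)$-property having at least $h(\ell,d)$ distinct $\ell$-element circuits, then $M$ has a collection of $d$ pairwise disjoint $2t$-element cocircuits.
   Context: A matroid $M$ has the $(t,2t)$-property if every $t$-element subset of $E(M)$ is contained in both a $2t$-element circuit and a $2t$-element cocircuit of $M$. $\mathbb{N}$ denotes the set of positive integers. *)

From mathcomp Require Import all_boot.
Set Implicit Arguments. Unset Strict Implicit. Unset Printing Implicit Defensive.

Record matroid (T : finType) := Matroid {
  indep : {set T} -> bool;
  indep0 : indep set0;
  indep_sub : forall A B : {set T}, A \subset B -> indep B -> indep A;
  indep_aug : forall A B : {set T}, indep A -> indep B -> #|A| < #|B| ->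
                exists2 x, x \in B :\: A & indep (x |: A)
}.

Section MatroidNotions.
Variables (T : finType) (M : matroid T).

Definition is_basis (B : {set T}) : bool := maxset (indep M) B.

Definition circuit (C : {set T}) : bool := minset (fun X => ~~ indep M X) C.

(* cocircuits: circuits of the dual matroid, i.e. minimal sets meeting
   every basis (equivalently, minimal sets not contained in any cobasis). *)
Definition cocircuit (C : {set T}) : bool :=
  minset (fun X : {set T} => [forall B : {set T}, is_basis B ==> (X :&: B != set0)]) C.

Definition t2t_property (t : nat) : Prop :=
  forall X : {set T}, #|X| = t ->
    (exists2 C, circuit C & (#|C| = 2 * t) /\ X \subset C) /\
    (exists2 D, cocircuit D & (#|D| = 2 * t) /\ X \subset D).

End MatroidNotions.

(* A large family of l-element circuits contains, by a sunflower-type argument,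
   a large subfamily whose petals C \ Z are nonempty and pairwise disjoint, for a
   kernel Z with |Z| <= l.  Strong circuit elimination removes the kernel points one
   at a time: the circuits through z are paired up and z is eliminated from each
   pair, which keeps the petals disjoint and loses at most a factor 3 per point.
   This yields t * d pairwise disjoint circuits.  For t of them, the
   (t,2t)-property gives a 2t-element cocircuit through one point of each; as a
   circuit and a cocircuit never meet in exactly one element, it meets each of
   the t circuits twice, hence lies in their union.  Repeating with the remaining
   circuits gives d disjoint 2t-element cocircuits. *)

From mathcomp Require Import all_boot zify.
Set Implicit Arguments. Unset Strict Implicit. Unset Printing Implicit Defensive.

Lemma leq_card_bigcup (T I : finType) (P : pred I) (F : I -> {set T}) :
  #|\bigcup_(i | P i) F i| <= \sum_(i | P i) #|F i|.
Proof.
elim/big_rec2: _ => [|i n U _ leUn]; first by rewrite cards0.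
by rewrite (leq_trans (leq_card_setU _ _).1) ?leq_add2l.
Qed.

Section SetFamilies.
Variable T : finType.
Implicit Types (A B C D U Y Z : {set T}) (F G S : {set {set T}}).

Lemma exists_subset_card A k : k <= #|A| -> exists2 B : {set T}, B \subset A & #|B| = k.
Proof.
case/card_geqP=> s [uniq_s size_s sub_sA]; exists [set x in s].
  by apply/subsetP=> x; rewrite inE => /sub_sA.
by rewrite cardsE (card_uniqP uniq_s).
Qed.

Lemma disjoint_cover_setD F G :
  trivIset F -> G \subset F -> [disjoint cover G & cover (F :\: G)].
Proof.
move=> /trivIsetP tiF sGF; apply: bigcup_disjoint => B /setDP[FB GNB].
rewrite disjoint_sym; apply: bigcup_disjoint => A GA.
apply: tiF => //; first exact: (subsetP sGF).
by apply/eqP => eqBA; move: GNB; rewrite eqBA GA.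
Qed.

Lemma leq_card_setI_cover n D G :
  trivIset G -> {in G, forall C, n <= #|D :&: C|} -> n * #|G| <= #|D :&: cover G|.
Proof.
have [k] := ubnP #|G|; elim: k G => // k IH G /ltnSE leGk tiG meetG.
have [-> | [C GC]] := set_0Vmem G; first by rewrite cards0 muln0.
have tiGC : trivIset (G :\ C) by apply: trivIsetS tiG; apply: subD1set.
rewrite (cardsD1 C G) GC mulnS -(cardsID C (D :&: cover G)) -setIA.
rewrite (setIidPr (bigcup_sup C GC)) -setIDA -coverD1 //.
apply: leq_add (meetG C GC) (IH _ _ tiGC _).
  by move: leGk; rewrite (cardsD1 C G) GC.
by move=> B /setD1P[_ /meetG].
Qed.

Lemma coverS F G : F \subset G -> cover F \subset cover G.
Proof. by move=> /subsetP sFG; apply/bigcupsP => C /sFG GC; apply: (bigcup_sup C). Qed.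

(* Unlike a sunflower, the kernel [Z] need not lie in the members; [C :\: Z]
   is the petal of [C]. *)
Definition petals Z S : {set T} := \bigcup_(C in S) (C :\: Z).

Definition flower Z S : bool :=
  [forall C in S, C :\: Z != set0] &&
  [forall A in S, forall B in S, (A != B) ==> [disjoint A :\: Z & B :\: Z]].

Lemma flowerP Z S :
  reflect ({in S, forall C, C :\: Z != set0} /\
           {in S &, forall A B, A != B -> [disjoint A :\: Z & B :\: Z]})
          (flower Z S).
Proof.
apply: (iffP andP) => [[/forall_inP petal_neq0 /forall_inP disj] | [petal_neq0 disj]].
  by split=> // A B SA SB; move/forall_inP: (disj A SA) => /(_ B SB)/implyP.
split; first exact/forall_inP.
by apply/forall_inP=> A SA; apply/forall_inP=> B SB; apply/implyP; apply: disj.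
Qed.

Lemma flower0 Z : flower Z set0.
Proof. by apply/flowerP; split=> [C|A B]; rewrite inE. Qed.

Lemma flowerS Z S1 S2 : S1 \subset S2 -> flower Z S2 -> flower Z S1.
Proof.
move=> /subsetP sS12 /flowerP[petal_neq0 disj]; apply/flowerP.
by split=> [C /sS12/petal_neq0 | A B /sS12 SA /sS12 SB]; last apply: disj.
Qed.

Lemma eq_flower Z1 Z2 S :
  {in S, forall C, C :\: Z1 = C :\: Z2} -> flower Z1 S = flower Z2 S.
Proof.
move=> eqZ; rewrite /flower (eq_forallb_in (P2 := fun C => C :\: Z2 != set0)).
  congr andb; apply: eq_forallb_in => A SA; apply: eq_forallb_in => B SB.
  by rewrite !eqZ.
by move=> C SC; rewrite eqZ.
Qed.

Lemma flower_set0 S : flower set0 S -> trivIset S.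
Proof.
case/flowerP=> _ disj; apply/trivIsetP=> A B SA SB.
by move/(disj A B SA SB); rewrite !setD0.
Qed.

Lemma petalsS Z S1 S2 : S1 \subset S2 -> petals Z S1 \subset petals Z S2.
Proof. by move=> /subsetP sS12; apply/bigcupsP=> C /sS12 S2C; apply: (bigcup_sup C). Qed.

Lemma flower_disjoint_petals Z S A :
  flower Z S -> A \in S -> [disjoint A :\: Z & petals Z (S :\ A)].
Proof.
case/flowerP=> _ disj SA; apply: bigcup_disjoint => B /setD1P[BA SB].
by apply: disj; rewrite // eq_sym.
Qed.

Lemma flower_setU1 Z S C :
  flower Z S -> C :\: Z != set0 -> [disjoint C :\: Z & petals Z S] ->
  flower Z (C |: S) /\ C \notin S.
Proof.
move=> /flowerP[petal_neq0 disj] CZ_neq0 disjC.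
have disjCS B : B \in S -> [disjoint C :\: Z & B :\: Z].
  by move=> SB; apply: disjointWr disjC; apply: (bigcup_sup B).
split; last first.
  apply: contra CZ_neq0 => SC; move: (disjCS C SC).
  by rewrite -setI_eq0 setIid.
apply/flowerP; split=> [B /setU1P[-> // | /petal_neq0 //] |].
move=> A B /setU1P[-> | SA] /setU1P[-> | SB]; rewrite ?eqxx // => neqAB.
- exact: disjCS.
- by rewrite disjoint_sym; apply: disjCS.
- exact: disj neqAB.
Qed.

Lemma card_le_sum_hitting U S :
  {in S, forall C, ~~ [disjoint C & U]} ->
  #|S| <= \sum_(v in U) #|[set C in S | v \in C]|.
Proof.
move=> meetU; apply: leq_trans (leq_card_bigcup _ _).
apply/subset_leq_card/subsetP => C SC.
have /set0Pn[v /setIP[Cv Uv]] : C :&: U != set0 by rewrite setI_eq0 meetU.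
by apply/bigcupP; exists v; rewrite // inE SC.
Qed.

Lemma exists_hitting_flower Y S :
  {in S, forall C, C :\: Y != set0} ->
  exists S0, [/\ S0 \subset S, flower Y S0 &
                {in S, forall C, ~~ [disjoint C & petals Y S0]}].
Proof.
move=> petal_neq0; pose isflower S0 := (S0 \subset S) && flower Y S0.
have [S0 /maxsetP[/andP[sS0S flS0] maxS0]] : {S0 | maxset isflower S0}.
  by apply: ex_maxset; exists set0; rewrite /isflower sub0set flower0.
exists S0; split=> // C SC; apply/negP => /(disjointWl (subsetDl C Y)) disjC.
have [flCS0 S0NC] := flower_setU1 flS0 (petal_neq0 C SC) disjC.
have /maxS0 eqCS0 : isflower (C |: S0) by rewrite /isflower subUset sub1set SC sS0S.
by move: S0NC; rewrite -(eqCS0 (subsetUr _ _)) setU11.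
Qed.

Lemma flower_of_uniform m l s Y S :
  #|Y| + s = l -> {in S, forall C, #|C| = l /\ Y \subset C} ->
  2 * (m * l) ^ s <= #|S| ->
  exists Z S0, [/\ #|Z| <= l, S0 \subset S, flower Z S0 & m <= #|S0|].
Proof.
elim: s Y S => [|s IH] Y S cardY unifS leS.
  suff : #|S| <= 1 by move: leS; rewrite expn0 muln1 => /leq_trans/[apply].
  rewrite -(cards1 Y); apply/subset_leq_card/subsetP => C SC; rewrite inE eq_sym.
  by have [cardC sYC] := unifS C SC; rewrite eqEcard sYC cardC -cardY addn0 /=.
have petal_neq0 : {in S, forall C, C :\: Y != set0}.
  move=> C SC; have [cardC _] := unifS C SC; rewrite setD_eq0.
  by apply/negP => /subset_leq_card; rewrite cardC -cardY; lia.
have [S0 [sS0S flS0 meetS0]] := exists_hitting_flower petal_neq0.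
have [leS0 | ltS0] := leqP m #|S0|.
  by exists Y, S0; split; rewrite // -cardY leq_addr.
(* As [S0] is small, some point [v] of its petals lies in many members of [S],
   and we recurse with the kernel [v |: Y]. *)
set U := petals Y S0; set g := 2 * (m * l) ^ s.
pose fibre v := [set C in S | v \in C].
have [/exists_inP[v Uv le_g_fibre] | /exists_inPn small] :=
  boolP [exists v in U, g <= #|fibre v|].
  have vNY : v \notin Y by case/bigcupP: Uv => C _ /setDP[].
  have [|C /setIdP[SC vC]|Z [S1 [cardZ sS1v flS1 leS1]]] :=
    IH (v |: Y) (fibre v) _ _ le_g_fibre.
  - by rewrite cardsU1 vNY add1n addSnnS.
  - by have [cardC sYC] := unifS C SC; rewrite subUset sub1set vC sYC.
  exists Z, S1; split=> //; apply: subset_trans sS1v _.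
  by apply/subsetP => C /setIdP[].
have leSU : #|S| <= #|U| * g.
  rewrite -sum_nat_const; apply: leq_trans (card_le_sum_hitting meetS0) _.
  by apply: leq_sum => v Uv; rewrite ltnW // ltnNge small.
have leUS0 : #|U| <= #|S0| * l.
  rewrite -sum_nat_const; apply: leq_trans (leq_card_bigcup _ _) _.
  apply: leq_sum => C S0C.
  by have [<- _] := unifS C (subsetP sS0S C S0C); apply/subset_leq_card/subsetDl.
have l_gt0 : 0 < l by rewrite -cardY addnS.
have g_gt0 : 0 < g by rewrite muln_gt0 expn_gt0 muln_gt0 l_gt0 (leq_ltn_trans _ ltS0).
have : m * l * g <= #|S0| * l * g.
  rewrite -{1}[g]/(2 * (m * l) ^ s) mulnCA -expnS (leq_trans leS) //.
  exact: leq_trans leSU (leq_mul leUS0 (leqnn g)).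
by rewrite leq_pmul2r // leq_pmul2r // leqNgt ltS0.
Qed.

End SetFamilies.

Section Matroid.
Variables (T : finType) (M : matroid T).
Implicit Types (A B C D I J X Z : {set T}) (F G S : {set {set T}}).

Lemma circuit_dep C : circuit M C -> ~~ indep M C.
Proof. by case/minsetP. Qed.

Lemma circuit_neq0 C : circuit M C -> C != set0.
Proof. by move/circuit_dep; apply: contraNneq => ->; apply: indep0. Qed.

Lemma circuit_indepD1 C x : circuit M C -> x \in C -> indep M (C :\ x).
Proof.
case/minsetP=> _ minC Cx; apply/negPn/negP => /minC/(_ (subD1set C x)) eqC.
by move: Cx; rewrite -eqC setD11.
Qed.

Lemma circuit_setU1_dep C I x : circuit M C -> C :\ x \subset I -> ~~ indep M (x |: I).
Proof.
move=> cC sCI; apply: contra (circuit_dep cC); apply: indep_sub.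
by rewrite -subDset.
Qed.

Lemma dep_sub_circuit A : ~~ indep M A -> exists2 C, circuit M C & C \subset A.
Proof.
by move=> depA; have [C] := @minset_exists _ (fun X => ~~ indep M X) _ depA; exists C.
Qed.

Lemma indep_extend A X : A \subset X -> indep M A ->
  exists I, [/\ A \subset I, I \subset X, indep M I &
                forall J, J \subset X -> indep M J -> #|J| <= #|I|].
Proof.
move=> sAX iA.
have PA : [&& A \subset A, A \subset X & indep M A] by rewrite subxx sAX iA.
have [I /and3P[sAI sIX iI] maxI] :=
  @arg_maxnP _ A (fun I => [&& A \subset I, I \subset X & indep M I]) (fun I => #|I|) PA.
exists I; split=> // J sJX iJ; rewrite leqNgt; apply/negP => ltIJ.
have [x /setDP[Jx INx] ixI] := indep_aug iI iJ ltIJ.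
suff : #|x |: I| <= #|I| by rewrite cardsU1 INx add1n ltnn.
apply: maxI.
by rewrite (subset_trans sAI (subsetUr _ _)) subUset sub1set (subsetP sJX) // sIX ixI.
Qed.

Lemma circuit_notin C I x : circuit M C -> C :\ x \subset I -> indep M I -> x \notin I.
Proof.
move=> cC sCI iI; apply/negP => Ix; move: (circuit_setU1_dep cC sCI).
by rewrite (setUidPr _) ?sub1set // iI.
Qed.

Lemma indep_setU1_no_circuit X I f :
  (forall C, circuit M C -> f \in C -> ~~ (C \subset X)) ->
  f \in X -> I \subset X -> indep M I -> indep M (f |: I).
Proof.
move=> noC Xf sIX iI; apply: contraT => /dep_sub_circuit[C cC sCfI].
have [Cf | CNf] := boolP (f \in C).
  by have := noC C cC Cf; rewrite (subset_trans sCfI) // subUset sub1set Xf.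
have sCI : C \subset I.
  apply/subsetP => x Cx; case/setU1P: (subsetP sCfI x Cx) => // xf.
  by rewrite -xf Cx in CNf.
by move: (circuit_dep cC); rewrite (indep_sub sCI iI).
Qed.

Lemma strong_circuit_elim C1 C2 e f :
  circuit M C1 -> circuit M C2 -> e \in C1 -> e \in C2 -> f \in C1 -> f \notin C2 ->
  exists C, [/\ circuit M C, f \in C & C \subset (C1 :|: C2) :\ e].
Proof.
move=> c1 c2 C1e C2e C1f C2Nf; set U := C1 :|: C2.
have [/existsP[C /and3P[cC Cf sC]] | /existsPn noC] :=
  boolP [exists C, [&& circuit M C, f \in C & C \subset U :\ e]]; first by exists C.
have {}noC C : circuit M C -> f \in C -> ~~ (C \subset U :\ e).
  by move=> cC Cf; move: (noC C); rewrite cC Cf.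
(* Otherwise [f] is a coloop of [U :\ e]: a largest independent subset [I] of [U :\ f]
   through [C2 :\ e] avoids [e], so [f |: I] is independent and larger than a
   largest independent subset of [U] through [C1 :\ f], which avoids [f]. *)
have [|I [sC2I sIU iI maxI]] := indep_extend (X := U :\ f) _ (circuit_indepD1 c2 C2e).
  by rewrite subsetD1 subDset subsetU ?subsetUr ?orbT // inE negb_and C2Nf orbT.
have INe : e \notin I := circuit_notin c2 sC2I iI.
have INf : f \notin I by move: sIU; rewrite subsetD1 => /andP[].
have Uef : f \in U :\ e by rewrite !inE C1f andbT; apply: contraNneq C2Nf => ->.
have iIf : indep M (f |: I).
  apply: indep_setU1_no_circuit noC Uef _ iI.
  by rewrite subsetD1 INe (subset_trans sIU) ?subD1set.
have [|L [sC1L sLU iL maxL]] := indep_extend (X := U) _ (circuit_indepD1 c1 C1f).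
  exact: subset_trans (subD1set _ _) (subsetUl _ _).
have LNf : f \notin L := circuit_notin c1 sC1L iL.
have sfIU : f |: I \subset U.
  by rewrite subUset sub1set !inE C1f (subset_trans sIU (subD1set _ _)).
have sLUf : L \subset U :\ f by rewrite subsetD1 LNf sLU.
have := leq_trans (maxL _ sfIU iIf) (maxI L sLUf iL).
by rewrite cardsU1 INf add1n ltnn.
Qed.

Lemma basis_of_card B J : is_basis M B -> indep M J -> #|B| <= #|J| -> is_basis M J.
Proof.
case/maxsetP=> iB maxB iJ leBJ; apply/maxsetP; split=> // K iK sJK.
apply/eqP; rewrite eq_sym eqEcard sJK /= leqNgt; apply/negP => ltJK.
have [x /setDP[_ BNx] ixB] := indep_aug iB iK (leq_ltn_trans leBJ ltJK).
by move: BNx; rewrite -(maxB _ ixB (subsetUr _ _)) setU11.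
Qed.

Lemma circuit_cocircuit_card_neq1 C D :
  circuit M C -> cocircuit M D -> #|C :&: D| != 1.
Proof.
move=> cC /minsetP[/forallP meetD minD]; apply/negP => /cards1P[e CDe].
have /setIP[Ce De] : e \in C :&: D by rewrite CDe set11.
(* By minimality [D :\ e] misses some basis [B]; a largest independent subset of
   [(B :|: C) :\ e] through [C :\ e] is again a basis, and it misses [D]. *)
have [B bB DeB0] : exists2 B, is_basis M B & (D :\ e) :&: B = set0.
  have /forallPn[B] : ~~ [forall B, is_basis M B ==> ((D :\ e) :&: B != set0)].
    by apply/negP => /minD/(_ (subD1set D e)) eqD; move: De; rewrite -eqD setD11.
  by rewrite negb_imply negbK => /andP[bB /eqP DeB0]; exists B.
have notin_DeB y : y \in B -> y \in D -> y = e.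
  move=> By Dy; apply/eqP/negPn/negP => ney.
  by have := in_set0 y; rewrite -DeB0 !inE ney Dy By.
have [|J [sCJ sJS iJ maxJ]] :=
  indep_extend (X := (B :|: C) :\ e) _ (circuit_indepD1 cC Ce).
  exact: setSD (subsetUr _ _).
have bJ : is_basis M J.
  apply: (basis_of_card bB iJ); rewrite leqNgt; apply/negP => ltJB.
  have [iB _] := maxsetP bB.
  have [x /setDP[Bx JNx] ixJ] := indep_aug iJ iB ltJB.
  have [xe | nexe] := eqVneq x e.
    by rewrite xe (negbTE (circuit_setU1_dep cC sCJ)) in ixJ.
  suff : #|x |: J| <= #|J| by rewrite cardsU1 JNx add1n ltnn.
  by apply: maxJ ixJ; rewrite subUset sub1set !inE nexe Bx sJS.
have /set0Pn[y /setIP[Dy Jy]] := implyP (meetD J) bJ.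
have /setD1P[ney /setUP[By | Cy]] := subsetP sJS y Jy.
  by rewrite (notin_DeB y By Dy) eqxx in ney.
have : y \in C :&: D by rewrite inE Cy Dy.
by rewrite CDe inE (negbTE ney).
Qed.

Lemma circuit_petal_elim Z z a b f :
  circuit M a -> circuit M b -> z \in Z -> z \in a -> z \in b ->
  f \in a :\: Z -> f \notin b ->
  exists C, [/\ circuit M C, f \in C :\: (Z :\ z) &
                C :\: (Z :\ z) \subset (a :\: Z) :|: (b :\: Z)].
Proof.
move=> ca cb Zz az bz /setDP[af ZNf] bNf.
have [C [cC Cf sC]] := strong_circuit_elim ca cb az bz af bNf.
exists C; split=> //; first by rewrite !inE (negbTE ZNf) andbF Cf.
rewrite -setDUl; apply/subsetP => x /setDP[Cx]; have := subsetP sC x Cx.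
by rewrite !inE => /andP[-> ->] /= ->.
Qed.

Lemma flower_pairing Z z S :
  z \in Z -> {in S, forall C, circuit M C /\ z \in C} -> flower Z S ->
  exists S', [/\ {in S', forall C, circuit M C}, flower (Z :\ z) S',
                 #|S| <= (#|S'|).*2.+1 & petals (Z :\ z) S' \subset petals Z S].
Proof.
move=> Zz; have [n] := ubnP #|S|; elim: n S => // n IH S /ltnSE leSn cS flS.
have [leS1 | /card_gt1P[a [b [Sa Sb neab]]]] := leqP #|S| 1.
  exists set0; split; rewrite ?flower0 ?cards0 //; first by move=> C; rewrite inE.
  by apply/bigcupsP => C; rewrite inE.
set S1 := S :\ a :\ b.
have sS1S : S1 \subset S := subset_trans (subD1set _ b) (subD1set S a).
have cardS : #|S| = #|S1|.+2.
  by rewrite (cardsD1 a S) Sa (cardsD1 b (S :\ a)) !inE eq_sym neab Sb.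
have [||S1' [cS1' flS1' leS1 sPS1]] := IH S1 _ _ (flowerS sS1S flS).
- by move: leSn; rewrite cardS => /ltnW.
- by move=> C /(subsetP sS1S)/cS.
have /flowerP[petal_neq0 disj] := flS.
have [f af] := set0Pn _ (petal_neq0 a Sa).
have bNf : f \notin b.
  apply/negP => bf; case/setDP: (af) => _ ZNf.
  by have := disjointFr (disj a b Sa Sb neab) af; rewrite inE bf ZNf.
have [[ca az] [cb bz]] := (cS a Sa, cS b Sb).
have [C [cC Cf sC]] := circuit_petal_elim ca cb Zz az bz af bNf.
have disjC : [disjoint C :\: (Z :\ z) & petals (Z :\ z) S1'].
  apply: disjointW sC sPS1 _; rewrite disjoints_subset subUset -!disjoints_subset.
  apply/andP; split.
    exact: disjointWr (petalsS _ (subD1set _ _)) (flower_disjoint_petals flS Sa).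
  apply: disjointWr (flower_disjoint_petals flS Sb); apply: petalsS.
  by apply: setSD; apply: subD1set.
have petalC_neq0 : C :\: (Z :\ z) != set0 by apply/set0Pn; exists f.
have [flCS1' S1'NC] := flower_setU1 flS1' petalC_neq0 disjC.
exists (C |: S1'); split=> //.
- by move=> D /setU1P[-> | /cS1'].
- by rewrite cardsU1 S1'NC cardS add1n doubleS !ltnS.
apply/bigcupsP => D /setU1P[-> | S1'D].
  by rewrite (subset_trans sC) // subUset !(bigcup_sup _ Sa, bigcup_sup _ Sb).
apply: subset_trans (petalsS _ sS1S); apply: subset_trans sPS1.
exact: (bigcup_sup D).
Qed.

Lemma disjoint_circuits_of_flower c Z S :
  {in S, forall C, circuit M C} -> flower Z S -> c * 3 ^ #|Z| <= #|S| ->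
  exists F, [/\ {in F, forall C, circuit M C}, trivIset F & c <= #|F|].
Proof.
move cardZ: #|Z| => n; elim: n Z S cardZ => [|n IH] Z S cardZ cS flS leS.
  move: flS; rewrite (cards0_eq cardZ) => /flower_set0 tiS.
  by exists S; rewrite muln1 in leS.
have /card_gt0P[z Zz] : 0 < #|Z| by rewrite cardZ.
have cardZz : #|Z :\ z| = n by move: cardZ; rewrite (cardsD1 z) Zz => -[].
set Sz := S :&: [set C : {set T} | z \in C]; set SNz := S :\: [set C : {set T} | z \in C].
(* Either a third of [S] avoids [z], or pairing up the members through [z]
   keeps half of the remaining two thirds. *)
have [leSNz | ltSNz] := leqP (c * 3 ^ n) #|SNz|.
  apply: (IH (Z :\ z) SNz) => //; first by move=> C /setDP[/cS].
  have petalE : {in SNz, forall C, C :\: (Z :\ z) = C :\: Z}.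
    move=> C /setDP[_]; rewrite inE => CNz; apply/setP => x; rewrite !inE.
    by case: eqP => [-> | _]; rewrite ?(negbTE CNz) ?andbF.
  by rewrite (eq_flower petalE) (flowerS (subsetDl _ _) flS).
have [|Sz' [cSz' flSz' leSz _]] :=
  @flower_pairing Z z Sz Zz _ (flowerS (subsetIl _ _) flS).
  by move=> C /setIP[/cS cC]; rewrite inE.
apply: (IH (Z :\ z) Sz') => //.
move: leS; rewrite -(cardsID [set C : {set T} | z \in C] S) -/Sz -/SNz expnS mulnCA.
move: leSz ltSNz; move: (c * 3 ^ n) #|Sz| #|SNz| #|Sz'| => N a b y; lia.
Qed.

Section T2tProperty.
Variable t : nat.
Hypotheses (t_gt0 : 0 < t) (Mt2t : t2t_property M t).

Lemma cocircuit_sub_cover G :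
  {in G, forall C, circuit M C} -> trivIset G -> #|G| = t ->
  exists D, [/\ cocircuit M D, #|D| = 2 * t & D \subset cover G].
Proof.
move=> cG tiG cardG.
have partG : partition G (cover G).
  by rewrite /partition eqxx tiG /=; apply/negP => /cG/circuit_neq0; rewrite eqxx.
have trX := transversalP partG; set X := transversal G (cover G) in trX.
have [_ [D coD [cardD sXD]]] := Mt2t (etrans (card_transversal trX) cardG).
exists D; split=> //.
have meet2 : {in G, forall C, 2 <= #|D :&: C|}.
  move=> C GC; case/and3P: trX => _ _ /forall_inP/(_ C GC)/eqP cardXC.
  have DC_gt0 : 0 < #|D :&: C| by rewrite -cardXC subset_leq_card // setSI.
  have := circuit_cocircuit_card_neq1 (cG C GC) coD; rewrite setIC => DC_neq1.
  by rewrite ltn_neqAle eq_sym DC_neq1.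
apply/setIidPl/eqP; rewrite eqEcard subsetIl cardD -cardG /=.
exact: leq_card_setI_cover.
Qed.

Lemma disjoint_cocircuits_of_disjoint_circuits d F0 :
  {in F0, forall C, circuit M C} -> trivIset F0 -> t * d <= #|F0| ->
  exists F, [/\ #|F| = d, {in F, forall D, cocircuit M D /\ #|D| = 2 * t},
                trivIset F & cover F \subset cover F0].
Proof.
elim: d F0 => [|d IH] F0 cF0 tiF0 leF0.
  exists set0; rewrite cards0; split=> //; first by move=> D; rewrite inE.
    by apply/trivIsetP => A B; rewrite inE.
  by apply/bigcupsP => D; rewrite inE.
have [G sGF0 cardG] := exists_subset_card (leq_trans (leq_pmulr _ (ltn0Sn d)) leF0).
have [D [coD cardD sDG]] := cocircuit_sub_cover (fun C GC => cF0 C (subsetP sGF0 C GC))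
  (trivIsetS sGF0 tiF0) cardG.
have [||F [cardF coF tiF sFF0]] := IH (F0 :\: G) _ (trivIsetD _ tiF0).
- by move=> C /setDP[/cF0].
- by move: leF0; rewrite cardsD (setIidPr sGF0) cardG mulnS; lia.
have disjDF : {in F, forall B, [disjoint D & B]}.
  move=> B FB; apply: disjointW sDG (subset_trans (bigcup_sup B FB) sFF0) _.
  exact: disjoint_cover_setD.
have F_neq0 : set0 \notin F.
  by apply/negP => /coF[_]; rewrite cards0; move: t_gt0; lia.
have [tiDF FND] := trivIsetU1 disjDF tiF F_neq0.
exists (D |: F); split=> //.
- by rewrite cardsU1 FND cardF.
- by move=> B /setU1P[-> | /coF].
apply/bigcupsP => B /setU1P[-> | FB].
  exact: subset_trans sDG (coverS sGF0).
exact: subset_trans (bigcup_sup B FB) (subset_trans sFF0 (coverS (subsetDl _ _))).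
Qed.

End T2tProperty.

End Matroid.

Unset Implicit Arguments.

Theorem lemma5p4 (t : nat) (t_pos : 0 < t) :
  exists h : nat -> nat -> nat,
    forall l d : nat, 0 < l -> 0 < d ->
    forall (T : finType) (M : matroid T),
      t2t_property M t ->
      h l d <= #|[set C : {set T} | circuit M C & #|C| == l]| ->
      exists F : {set {set T}},
        [/\ #|F| = d,
            (forall D, D \in F -> cocircuit M D /\ #|D| = 2 * t)
          & trivIset F].
Proof.
exists (fun l d => 2 * (t * d * 3 ^ l * l) ^ l) => l d _ _ T M Mt2t leS.
set S := [set C : {set T} | circuit M C & #|C| == l] in leS.
have unifS : {in S, forall C : {set T}, #|C| = l /\ set0 \subset C}.
  by move=> C /setIdP[_ /eqP cardC]; rewrite sub0set.
have [|Z [S0 [cardZ sS0S flS0 leS0]]] :=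
  @flower_of_uniform _ (t * d * 3 ^ l) l l set0 S _ unifS leS; first by rewrite cards0.
have cS0 : {in S0, forall C, circuit M C} by move=> C /(subsetP sS0S)/setIdP[].
have [|F0 [cF0 tiF0 leF0]] := @disjoint_circuits_of_flower _ M (t * d) _ _ cS0 flS0.
  exact: leq_trans (leq_mul (leqnn _) (leq_pexp2l _ cardZ)) leS0.
have [F [cardF coF tiF _]] :=
  disjoint_cocircuits_of_disjoint_circuits t_pos Mt2t cF0 tiF0 leF0.
by exists F.
Qed.
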